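(* Let $\mathcal{S}$ be a state space, let $\mathcal{A}\subset\mathbb{R}^d$ be an action space of finite positive Lebesgue measure, let $R:\mathcal{S}\times\mathcal{A}\to\mathbb{R}$ be a reward function, let $\tau(\cdot\mid s,a)$ be a transition kernel, and let $\gamma\in(0,1)$ and $\tilde{\alpha}>0$. Let $\mathcal{Q}$ be a probability distribution over (measurable) functions $Q:\mathcal{S}\times\mathcal{A}\to\mathbb{R}$ such that for every $(s,a)$ the random variable $Q(s,a)$, $Q\sim\mathcal{Q}$, has bounded support and is sub-Gaussian with mean $\mu(s,a)$ and variance proxy $\sigma^2(s,a)$, with $\sigma\ge 0$. For $\beta\ge 0$ and a next state $s'\sim\tau(\cdot\mid s,a)$ define the pessimistic and the ordinary backups $$\mathcal{T}^{*}_{\beta}Q(s,a)=R(s,a)+\gamma\,\mathbb{E}_{Q\sim\mathcal{Q}}\Big[\tilde{\alpha}\log\Big(\int_{\mathcal{A}}\exp\big(\tilde{\alpha}^{-1}(Q(s',a')-\beta\sigma(s',a'))\big)\,da'\Big)\Big],$$ $$\mathcal{T}^{*}\mu(s,a)=R(s,a)+\gamma\,\tilde{\alpha}\log\Big(\int_{\mathcal{A}}\exp\big(\tilde{\alpha}^{-1}\mu(s',a')\big)\,da'\Big).$$ If $\beta\ge\sup_{(s'',a'')\in\mathcal{S}\times\mathcal{A}}\tfrac12\tilde{\alpha}^{-1}\sigma(s'',a'')$, then for every $(s,a)$ and every next state $s'$, $\mathcal{T}^{*}_{\beta}Q(s,a)\le\mathcal{T}^{*}\mu(s,a)$, i.e.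 the $\beta$-pessimistic backup (which shifts next-state values by $-\beta\sigma(s',a')$) does not overestimate.
   Context: A real random variable $X$ with mean $\mu=\mathbb{E}[X]$ is called sub-Gaussian with variance proxy $\sigma^2$ if $\mathbb{E}[\exp(\lambda X)]\le\exp(\lambda\mu+\tfrac12\lambda^2\sigma^2)$ for all $\lambda\in\mathbb{R}$. Here $\mu(s,a)=\mathbb{E}_{Q\sim\mathcal{Q}}[Q(s,a)]$. *)

From HB Require Import structures.
From mathcomp Require Import all_boot all_order all_algebra.
From mathcomp Require Import all_classical all_reals all_analysis.
Set Implicit Arguments. Unset Strict Implicit. Unset Printing Implicit Defensive.
Import Order.TTheory GRing.Theory Num.Theory.
Local Open Scope classical_set_scope.
Local Open Scope ring_scope.

(* Euclidean space R^(n+1), built as R * (R * ( ... * R)) with the product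
   sigma-algebra, packaged with its measure display. *)
Fixpoint Rpow (R : realType) (n : nat) : {dsp : measure_display & measurableType dsp} :=
  match n with
  | 0 => existT (fun d => measurableType d) _ (Real.sort R : measurableType _)
  | n'.+1 => existT (fun d => measurableType d) _
      (((Real.sort R : measurableType _) * projT2 (Rpow R n'))%type : measurableType _)
  end.

Definition Rsp (R : realType) (n : nat) : measurableType (projT1 (Rpow R n)) :=
  projT2 (Rpow R n).

Fixpoint leb_pow (R : realType) (n : nat) : set (Rsp R n) -> \bar R :=
  match n return set (Rsp R n) -> \bar R with
  | 0 => (@lebesgue_measure R : set R -> \bar R)
  | n'.+1 => ((@lebesgue_measure R : set R -> \bar R) \x (@leb_pow R n'))%E
  end.

Arguments Rsp : clear implicits.
Arguments leb_pow : clear implicits.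

Definition eln (R : realType) (x : \bar R) : \bar R :=
  match x with
  | r%:E => if 0 < r then (ln r)%:E else -oo%E
  | +oo%E => +oo%E
  | -oo%E => -oo%E
  end.

Section defs.
Context {dO : measure_display} {Om : measurableType dO} {R : realType}.

Definition rv_mean (P : probability Om R) (X : Om -> R) : R := fine ('E_P[X])%E.

Definition subGaussian (P : probability Om R) (X : Om -> R) (s2 : R) : Prop :=
  forall l : R,
    ('E_P[fun w => expR (l * X w)] <= (expR (l * rv_mean P X + 2^-1 * l ^+ 2 * s2))%:E)%E.

Definition bounded_support (P : probability Om R) (X : Om -> R) : Prop :=
  exists M : R, {ae P, forall w, `|X w| <= M}.
End defs.

Section backups.
Context {dO : measure_display} {Om : measurableType dO} {R : realType}
        {S : Type} {n : nat}.
Local Notation X := (Rsp R n).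

Definition soft_value (A : set X) (alpha : R) (f : X -> R) : \bar R :=
  (alpha%:E * eln (\int[leb_pow R n]_(a in A) (expR (f a / alpha))%:E))%E.

Definition Qmean (P : probability Om R) (Q : Om -> S -> X -> R) : S -> X -> R :=
  fun s a => rv_mean P (fun w => Q w s a).

Definition pess_backup (P : probability Om R) (Q : Om -> S -> X -> R)
  (sigma : S -> X -> R) (Rw : S -> X -> R) (A : set X) (gamma alpha beta : R)
  (s : S) (a : X) (s' : S) : \bar R :=
  ((Rw s a)%:E + gamma%:E *
     \int[P]_w soft_value A alpha (fun a' => (Q w s' a' - beta * sigma s' a')%R))%E.

Definition mean_backup (mu : S -> X -> R) (Rw : S -> X -> R) (A : set X)
  (gamma alpha : R) (s : S) (a : X) (s' : S) : \bar R :=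
  ((Rw s a)%:E + gamma%:E * soft_value A alpha (mu s'))%E.
End backups.

From HB Require Import structures.
From mathcomp Require Import all_boot all_order all_algebra.
From mathcomp Require Import all_classical all_reals all_analysis.
From mathcomp Require Import ring lra measurable_realfun.
Set Implicit Arguments. Unset Strict Implicit. Unset Printing Implicit Defensive.
Import Order.TTheory GRing.Theory Num.Theory.
Local Open Scope classical_set_scope.
Local Open Scope ring_scope.

(* For a fixed action a, the sub-Gaussian bound with lambda = 1/alpha gives
   E[exp((Q(s',a) - beta sigma)/alpha)] <= exp(mu/alpha + sigma^2/(2 alpha^2) - beta sigma/alpha),
   which is at most exp(mu/alpha) exactly when beta >= sigma/(2 alpha). By Tonelli the
   expected partition function E[int_A exp((Q - beta sigma)/alpha)] is then bounded by
   int_A exp(mu/alpha), and Jensen's inequality for the concave logarithm,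
   E[alpha log Z] <= alpha log E[Z], concludes. *)

Lemma product_measure1_sigma_finite d1 d2 (T1 : measurableType d1)
    (T2 : measurableType d2) (R : realType)
    (m1 : {sigma_finite_measure set T1 -> \bar R})
    (m2 : {sigma_finite_measure set T2 -> \bar R}) :
  sigma_finite setT (m1 \x m2)%E.
Proof.
have /sigma_finiteP[F [UF ndF finF]] := sigma_finiteT m1.
have /sigma_finiteP[G [UG ndG finG]] := sigma_finiteT m2.
exists (fun k => F k `*` G k); last first.
  move=> k; have [mFk Fk] := finF k; have [mGk Gk] := finG k.
  split; first exact: measurableX.
  by rewrite product_measure1E// lte_mul_pinfty// ge0_fin_numE.
apply/seteqP; split=> [[x y] _|//].
have [i _ Fix] : (\bigcup_k F k) x by rewrite -UF.
have [j _ Gjy] : (\bigcup_k G k) y by rewrite -UG.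
exists (maxn i j) => //; split.
- by move: x Fix; exact/subsetPset/ndF/leq_maxl.
- by move: y Gjy; exact/subsetPset/ndG/leq_maxr.
Qed.

(* [lebesgue_measure] is declared on the sigma-algebra generated by the half-open
   intervals, whose display differs from that of [R]; its measure structure is
   transported to a copy on [R]. *)
Definition lebesgueR (R : realType) : set R -> \bar R := @lebesgue_measure R.
Arguments lebesgueR : clear implicits.

Section lebesgueR.
Variable R : realType.
Let lebesgueR0 : lebesgueR R set0 = 0%E.
Proof. exact: (@measure0 _ _ _ (@lebesgue_measure R)). Qed.
Let lebesgueR_ge0 A : (0 <= lebesgueR R A)%E.
Proof. exact: (@measure_ge0 _ _ _ (@lebesgue_measure R)). Qed.
Let lebesgueR_sigma_additive : semi_sigma_additive (lebesgueR R).
Proof. exact: (@measure_semi_sigma_additive _ _ _ (@lebesgue_measure R)). Qed.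
HB.instance Definition _ := isMeasure.Build _ _ _ (lebesgueR R)
  lebesgueR0 lebesgueR_ge0 lebesgueR_sigma_additive.
Let lebesgueR_sigma_finite : sigma_finite setT (lebesgueR R).
Proof. exact: (@sigma_finiteT _ _ _ (@lebesgue_measure R)). Qed.
HB.instance Definition _ :=
  Measure_isSigmaFinite.Build _ _ _ (lebesgueR R) lebesgueR_sigma_finite.
End lebesgueR.

(* The library's sigma-finite instance on [m1 \x m2] is shadowed by the canonical
   one for products of subprobabilities, hence a named product with its own instance. *)
Definition lebesgueR_prod {R : realType} {d} {T : measurableType d}
  (m : {sigma_finite_measure set T -> \bar R}) : set (R * T)%type -> \bar R :=
  (lebesgueR R \x m)%E.

HB.instance Definition _ (R : realType) d (T : measurableType d)
  (m : {sigma_finite_measure set T -> \bar R}) :=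
  Measure.on (lebesgueR_prod m).
HB.instance Definition _ (R : realType) d (T : measurableType d)
  (m : {sigma_finite_measure set T -> \bar R}) :=
  Measure_isSigmaFinite.Build _ _ _ (lebesgueR_prod m)
    (product_measure1_sigma_finite (lebesgueR R) m).

Fixpoint leb_pow_measure (R : realType) (n : nat) :
    {sigma_finite_measure set (Rsp R n) -> \bar R} :=
  match n return {sigma_finite_measure set (Rsp R n) -> \bar R} with
  | 0 => lebesgueR R
  | n.+1 => lebesgueR_prod (leb_pow_measure R n)
  end.

Lemma leb_pow_measureE (R : realType) n :
  leb_pow_measure R n = leb_pow R n :> (set _ -> \bar R).
Proof. by elim: n => //= n <-. Qed.

Lemma le_integral_pointwise d (T : measurableType d) (R : realType)
    (mu : {measure set T -> \bar R}) (D : set T) (f g : T -> \bar R) :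
  (forall x, D x -> (f x <= g x)%E) ->
  (\int[mu]_(x in D) f x <= \int[mu]_(x in D) g x)%E.
Proof.
move=> fg; have ge0_le_integralT (h1 h2 : T -> \bar R) :
    (forall x, 0 <= h1 x)%E -> (forall x, h1 x <= h2 x)%E ->
    (\int[mu]_x h1 x <= \int[mu]_x h2 x)%E.
  move=> h1_ge0 h12; have h2_ge0 x : (0 <= h2 x)%E by exact: le_trans (h12 x).
  rewrite !ge0_integralTE//; apply: ereal_sup_le => _ [h /= hh1 <-].
  by exists h => //= x; exact: le_trans (hh1 x) (h12 x).
have fgD x : x \in D -> (f x <= g x)%E by move/set_mem; exact: fg.
rewrite integralE [leRHS]integralE !(integral_mkcond D).
apply: leeB; apply: ge0_le_integralT => x; rewrite ?patchE.
- by case: ifP => // _; exact: funepos_ge0.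
- by case: ifP => // xD; exact: (funepos_le fgD).
- by case: ifP => // _; exact: funeneg_ge0.
- by case: ifP => // xD; exact: (funeneg_le fgD).
Qed.

Lemma eln_lne (R : realType) : @eln R =1 @lne R.
Proof. by case=> [r| |] //=; rewrite ltNge; case: (r <= 0)%R. Qed.

Lemma le_lne (R : realType) : {homo @lne R : x y / (x <= y)%E}.
Proof.
move=> x y xy; have [x_le0|x_gt0] := leP x 0%E; first by rewrite le0_lneNy// leNye.
by rewrite lee_lne// in_itv/= leey ?andbT// ltW// (lt_le_trans x_gt0).
Qed.

Lemma lne_le_tangent (R : realType) (c : R) (x : \bar R) :
  0 < c -> (0 <= x)%E -> (lne x <= c^-1%:E * x + (ln c - 1)%:E)%E.
Proof.
move=> c_gt0; case: x => [r r_ge0| _|//]; last by rewrite gt0_muley ?lte_fin ?invr_gt0.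
have [r_le0|r_gt0] := leP r 0; first by rewrite le0_lneNy ?lee_fin// leNye.
rewrite lne_EFin// -EFinM -EFinD lee_fin.
have rc_gt0 : 0 < c^-1 * r by rewrite mulr_gt0 ?invr_gt0.
have := @le_ln1Dx R (c^-1 * r - 1); rewrite [1 + _]addrC subrK lnM ?posrE ?invr_gt0//.
by rewrite lnV ?posrE//; lra.
Qed.

Section jensen_lne.
Local Open Scope ereal_scope.
Context d (T : measurableType d) (R : realType) (P : probability T R).
Variables (F : T -> \bar R) (alpha : R).
Hypotheses (mF : measurable_fun setT F) (F_ge0 : forall x, 0 <= F x).
Hypothesis alpha_gt0 : (0 < alpha)%R.

Lemma integral_lne_le_tangent c : (0 < c)%R ->
  \int[P]_x F x \is a fin_num ->
  \int[P]_x (alpha%:E * lne (F x)) <=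
    (alpha / c)%:E * \int[P]_x F x + (alpha * (ln c - 1))%:E.
Proof.
move=> c_gt0 finF.
have intF : P.-integrable setT F.
  apply/integrableP; split=> //; under eq_integral do rewrite gee0_abs//.
  by rewrite ltey_eq finF.
apply: le_trans (le_integral_pointwise P (g := fun x =>
  ((alpha / c)%:E * F x + (alpha * (ln c - 1))%:E)%E) _) _.
  move=> x _; rewrite EFinM [X in _ <= _ + X]EFinM -muleA -muleDr ?fin_num_adde_defl//.
  apply: lee_wpmul2l; first by rewrite lee_fin ltW.
  exact: lne_le_tangent c_gt0 (F_ge0 x).
rewrite integralD//; last 2 first.
- exact: integrableZl.
- exact: finite_measure_integrable_cst.
by rewrite integralZl// integral_cst// [X in _ + _ * X]probability_setT mule1.
Qed.

Lemma integral_lne_le :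
  \int[P]_x (alpha%:E * lne (F x)) <= alpha%:E * lne (\int[P]_x F x).
Proof.
have : 0 <= \int[P]_x F x by exact: integral_ge0.
case E : (\int[P]_x F x) => [r| |] // r_ge0; last first.
  by rewrite gt0_muley ?lte_fin// leey.
have tangent c := integral_lne_le_tangent c; rewrite E in tangent.
have [r_gt0|r_le0] := ltP 0%R r.
  have := tangent r r_gt0 isT; rewrite lne_EFin// -!EFinM -EFinD divfK ?gt_eqF//.
  by have -> : (alpha + alpha * (ln r - 1) = alpha * ln r)%R by ring.
have r0 : r = 0%R by apply/le_anti; rewrite r_le0 -lee_fin.
rewrite {}r0 in tangent *.
(* The tangents at c = expR (M / alpha + 1) bound the left-hand side by every M. *)
rewrite le0_lneNy// gt0_muleNy ?lte_fin// leeNy_eq; apply/eqP/eq_ninfty => M.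
have := tangent (expR (M / alpha + 1)) (expR_gt0 _) isT.
rewrite mule0 add0e expRK.
by have -> : (alpha * (M / alpha + 1 - 1) = M)%R by field; rewrite gt_eqF.
Qed.

End jensen_lne.

Lemma subGaussian_expR_shift_le d (Om : measurableType d) (R : realType)
    (P : probability Om R) (X : Om -> R) (s alpha beta : R) :
  measurable_fun setT X -> 0 < alpha -> 0 <= s ->
  2^-1 * alpha^-1 * s <= beta -> subGaussian P X (s ^+ 2) ->
  (\int[P]_w (expR ((X w - beta * s) / alpha))%:E <=
    (expR (rv_mean P X / alpha))%:E)%E.
Proof.
move=> mX alpha_gt0 s_ge0 s_le_beta /(_ alpha^-1); rewrite unlock => mgf_le.
have shiftE w : (X w - beta * s) / alpha = - (beta * s / alpha) + alpha^-1 * X w.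
  by rewrite mulrBl mulrC addrC.
under eq_integral do rewrite shiftE expRD EFinM.
have mexpX : measurable_fun setT (fun w => (expR (alpha^-1 * X w))%:E).
  by apply/measurable_EFinP; apply: measurableT_comp => //; exact: measurable_funM.
rewrite ge0_integralZl ?lee_fin ?expR_ge0//.
apply: le_trans (lee_wpmul2l _ mgf_le) _; first by rewrite lee_fin expR_ge0.
rewrite -EFinM -expRD lee_fin ler_expR.
have alphaV_ge0 : 0 <= alpha^-1 by rewrite invr_ge0 ltW.
have := ler_wpM2r (mulr_ge0 s_ge0 alphaV_ge0) s_le_beta.
by rewrite expr2; nra.
Qed.

Section pessimistic_soft_value.
Context dO dX (Om : measurableType dO) (X : measurableType dX) (R : realType).
Variables (P : probability Om R) (m : {sigma_finite_measure set X -> \bar R}).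
Variables (A : set X) (q : Om -> X -> R) (sigma : X -> R) (alpha beta : R).
Hypotheses (mA : measurable A)
  (mq : measurable_fun setT (fun p : Om * X => q p.1 p.2))
  (msigma : measurable_fun A sigma) (sigma_ge0 : forall a, A a -> 0 <= sigma a)
  (alpha_gt0 : 0 < alpha)
  (sigma_le_beta : forall a, A a -> 2^-1 * alpha^-1 * sigma a <= beta)
  (q_subGaussian : forall a, A a -> subGaussian P (q^~ a) (sigma a ^+ 2)).

Let pess : Om * X -> \bar R :=
  (fun p => (expR ((q p.1 p.2 - beta * sigma p.2) / alpha))%:E) \_ (setT `*` A).

Let measurable_pess : measurable_fun setT pess.
Proof.
have mTA : measurable ([set: Om] `*` A) by exact: measurableX.
rewrite /pess -(measurable_restrictT _ mTA); apply/measurable_EFinP.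
apply: measurableT_comp => //; apply: measurable_funM => //.
apply: measurable_funB; first exact: measurable_funTS.
apply: measurable_funM => //.
apply: (measurable_comp mA _ msigma (measurable_funTS measurable_snd)).
by move=> _ [p [_ Ap] <-].
Qed.

Let pess_ge0 p : (0 <= pess p)%E.
Proof. by rewrite /pess patchE; case: ifPn; rewrite // lee_fin expR_ge0. Qed.

Let partition_pessE w :
  (\int[m]_(a in A) (expR ((q w a - beta * sigma a) / alpha))%:E =
    \int[m]_a pess (w, a))%E.
Proof.
rewrite integral_mkcond; apply: eq_integral => a _.
by rewrite /pess !patchE in_setX in_setT.
Qed.

Lemma measurable_partition_pess : measurable_fun setT
  (fun w => \int[m]_(a in A) (expR ((q w a - beta * sigma a) / alpha))%:E)%E.
Proof.
under eq_fun do rewrite partition_pessE.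
exact: measurable_fun_fubini_tonelli_F.
Qed.

Lemma expected_partition_pess_le :
  (\int[P]_w \int[m]_(a in A) (expR ((q w a - beta * sigma a) / alpha))%:E <=
    \int[m]_(a in A) (expR (rv_mean P (q^~ a) / alpha))%:E)%E.
Proof.
under eq_integral do rewrite partition_pessE.
rewrite (fubini_tonelli pess)// [leRHS]integral_mkcond.
apply: le_integral_pointwise => a _; rewrite patchE; case: ifPn => [/set_mem Aa|aA].
  under eq_integral do rewrite /pess patchE in_setX in_setT mem_set//=.
  apply: subGaussian_expR_shift_le alpha_gt0 (sigma_ge0 Aa) (sigma_le_beta Aa)
    (q_subGaussian Aa).
  exact: measurableT_comp mq (pair2_measurable a).
under eq_integral do rewrite /pess patchE in_setX in_setT (negbTE aA).
by rewrite integral0.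
Qed.

Lemma expected_soft_value_pess_le :
  (\int[P]_w (alpha%:E *
      lne (\int[m]_(a in A) (expR ((q w a - beta * sigma a) / alpha))%:E)) <=
    alpha%:E * lne (\int[m]_(a in A) (expR (rv_mean P (q^~ a) / alpha))%:E))%E.
Proof.
apply: le_trans (integral_lne_le P measurable_partition_pess _ alpha_gt0) _.
  by move=> w; apply: integral_ge0 => a _; rewrite lee_fin expR_ge0.
apply: lee_wpmul2l; first by rewrite lee_fin ltW.
exact/le_lne/expected_partition_pess_le.
Qed.

End pessimistic_soft_value.

Theorem corollary1 (R : realType) (n : nat)
  (dS : measure_display) (S : measurableType dS)
  (dO : measure_display) (Om : measurableType dO) (P : probability Om R)
  (A : set (Rsp R n))
  (Rw : S -> Rsp R n -> R) (tau : R.-pker S ~> S)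
  (gamma alpha beta : R)
  (Q : Om -> S -> Rsp R n -> R) (sigma : S -> Rsp R n -> R) :
  measurable A ->
  (0 < leb_pow R n A)%E -> (leb_pow R n A < +oo)%E ->
  0 < gamma < 1 -> 0 < alpha ->
  (* each sample Q is a measurable function on S x A *)
  (forall w, measurable_fun setT (fun p : S * Rsp R n => Q w p.1 p.2)) ->
  (* Q is random: jointly measurable in (sample, action) *)
  (forall s, measurable_fun setT (fun p : Om * Rsp R n => Q p.1 s p.2)) ->
  (forall s, measurable_fun A (sigma s)) ->
  (forall s a, A a -> 0 <= sigma s a) ->
  (forall s a, A a -> bounded_support P (fun w => Q w s a)) ->
  (forall s a, A a -> subGaussian P (fun w => Q w s a) (sigma s a ^+ 2)) ->
  0 <= beta ->
  (* beta >= sup_{(s'',a'')} sigma(s'',a'') / (2 alpha) *)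
  (forall s'' a'', A a'' -> 2^-1 * alpha^-1 * sigma s'' a'' <= beta) ->
  forall (s : S) (a : Rsp R n) (s' : S), A a ->
    (pess_backup P Q sigma Rw A gamma alpha beta s a s'
     <= mean_backup (Qmean P Q) Rw A gamma alpha s a s')%E.
Proof.
move=> mA _ _ /andP[gamma_gt0 _] alpha_gt0 _ mQ msigma sigma_ge0 _ subG _
  sigma_le_beta s a s' _.
apply: leeD2l; apply: lee_wpmul2l; first by rewrite lee_fin ltW.
rewrite /soft_value -(leb_pow_measureE R n) eln_lne.
under eq_integral do rewrite eln_lne.
exact: (expected_soft_value_pess_le (leb_pow_measure R n) mA (mQ s')
  (msigma s') (sigma_ge0 s') alpha_gt0 (sigma_le_beta s') (subG s')).
Qed.
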